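(* Consider the power network system described in the context and an equilibrium $(\eta^*,\omega^*,p^{M,*},p^{c,*},\psi^* )$ of it for some constant switching vector $\sigma^*\in\{0,1\}^{|\tilde{\mathcal L}|}$; write $p^{c,*}$ also for the common value of the (equal) entries of the equilibrium power command vector. Suppose $\kappa_j=q_j^{-1}$ for all $j\in\mathcal N$, and suppose there exist $\theta\ge 0$ and $\zeta\in\mathbb R$ such that $p^{c,*}-\theta/K\le\zeta\le p^{c,*}$ and, for every $(l,j)\in\tilde{\mathcal L}$, $\sigma^*_{l,j}\in\{0\}$ if $\zeta>c_{l,j}/\overline d_{l,j}$; $\sigma^*_{l,j}\in\{0,\rho_{l,j}\}$ if $\zeta=c_{l,j}/\overline d_{l,j}$; $\sigma^*_{l,j}\in\{\rho_{l,j}\}$ if $|\zeta|<c_{l,j}/\overline d_{l,j}$; $\sigma^*_{l,j}\in\{\rho_{l,j},1\}$ if $\zeta=-c_{l,j}/\overline d_{l,j}$; $\sigma^*_{l,j}\in\{1\}$ if $\zeta<-c_{l,j}/\overline d_{l,j}$. Then $(p^{M,*},\sigma^* )$ is $\epsilon$-optimal for the H-OSC problem with $\epsilon=3\theta^2/(2K)$.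
   Context: Let $(\mathcal N,\mathcal E)$ be a connected directed graph (the power network) with bus set $\mathcal N=\{1,\dots,|\mathcal N|\}$ and line set $\mathcal E$, oriented arbitrarily so that $(i,j)\in\mathcal E$ implies $(j,i)\notin\mathcal E$; $\mathcal N^p_j=\{k:(k,j)\in\mathcal E\}$, $\mathcal N^s_j=\{k:(j,k)\in\mathcal E\}$. Let $(\mathcal N,\tilde{\mathcal E})$ be a connected directed graph (communication network). For each $j\in\mathcal N$, $\mathcal L_j$ is a finite set of on-off loads and $\tilde{\mathcal L}=\{(l,j):l\in\mathcal L_j,j\in\mathcal N\}$; load $(l,j)$ has magnitude $\overline d_{l,j}>0$, switching state $\sigma_{l,j}\in\{0,1\}$, user-desired state $\rho_{l,j}\in\{0,1\}$, and a cost constant $c_{l,j}$. Constants $M_j,\gamma_j,\kappa_j,A_j,\tau_j,q_j>0$, $p^L_j\in\mathbb R$ ($j\in\mathcal N$), $B_{ij}>0$ ($(i,j)\in\mathcal E$), $\tau_{ij}>0$ ($(i,j)\in\tilde{\mathcal E}$); $K=\sum_{j\in\mathcal N}\kappa_j$. State $x=(\eta,\omega,p^M,p^c,\psi)$, dynamics: $\dot\eta_{ij}=\omega_i-\omega_j$, $(i,j)\in\mathcal E$; $M_j\dot\omega_j=p^M_j-p^L_j-A_j\omega_j-\sum_{l\in\mathcal L_j}\overline d_{l,j}\sigma_{l,j}-\sum_{k\in\mathcal N^s_j}B_{jk}\eta_{jk}+\sum_{i\in\mathcal N^p_j}B_{ij}\eta_{ij}$; $\gamma_j\dot p^M_j=-(p^M_j+\kappa_j\omega_j-\kappa_jp^c_j)$;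 $\tau_{ij}\dot\psi_{ij}=p^c_i-p^c_j$, $(i,j)\in\tilde{\mathcal E}$; $\tau_j\dot p^c_j=-p^M_j+p^L_j+\sum_{l\in\mathcal L_j}\overline d_{l,j}\sigma_{l,j}-\sum_{k:(j,k)\in\tilde{\mathcal E}}\psi_{jk}+\sum_{i:(i,j)\in\tilde{\mathcal E}}\psi_{ij}$. An equilibrium for fixed $\sigma$ is a state at which all derivatives vanish; at every equilibrium all entries of $p^{c,*}$ coincide. H-OSC problem: minimize over $p^M\in\mathbb R^{|\mathcal N|}$ and $\sigma\in\{0,1\}^{|\tilde{\mathcal L}|}$ the cost $C(p^M,\sigma)=\sum_{j\in\mathcal N}\big[\tfrac12q_j(p^M_j)^2+\sum_{l\in\mathcal L_j}C^d_{l,j}(\sigma_{l,j},\rho_{l,j})\big]$, where $C^d_{l,j}=c_{l,j}$ if $\sigma_{l,j}\ne\rho_{l,j}$ and $0$ otherwise, subject to $\sum_j p^M_j=\sum_j\big(p^L_j+\sum_{l\in\mathcal L_j}\overline d_{l,j}\sigma_{l,j}\big)$. A point $(p^M,\sigma)$ is $\epsilon$-optimal for H-OSC if $C(p^M,\sigma)\le(\text{minimum of H-OSC})+\epsilon$. *)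

From mathcomp Require Import all_boot all_order all_algebra.
From mathcomp Require Import reals.
Set Implicit Arguments. Unset Strict Implicit. Unset Printing Implicit Defensive.
Import Order.TTheory GRing.Theory Num.Theory.
Local Open Scope ring_scope.

(* The on-off loads form a finite type [Ld]; [bus l] is the bus j with
   l \in L_j, so L_j = [pred l | bus l == j] and ~L = Ld. *)

Definition graph_connected (n : nat) (E : rel 'I_n) : Prop :=
  forall i j : 'I_n, connect [rel a b | E a b || E b a] i j.

Definition oriented (n : nat) (E : rel 'I_n) : Prop :=
  forall i j : 'I_n, E i j -> ~~ E j i.

Record network (R : realType) (n : nat) (Ld : finType) := Network {
  E   : rel 'I_n;              (* power lines *)
  Et  : rel 'I_n;              (* communication links *)
  bus : Ld -> 'I_n;
  dbar : Ld -> R;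
  rho  : Ld -> bool;
  cost : Ld -> R;
  Mc : 'I_n -> R; gam : 'I_n -> R; kap : 'I_n -> R; Ac : 'I_n -> R;
  tauN : 'I_n -> R; q : 'I_n -> R; pL : 'I_n -> R;
  B : 'I_n -> 'I_n -> R;
  tauE : 'I_n -> 'I_n -> R
}.

Definition network_ok (R : realType) (n : nat) (Ld : finType)
    (N : network R n Ld) : Prop :=
  [/\ graph_connected (E N) /\ oriented (E N),
      graph_connected (Et N),
      (forall l, 0 < dbar N l),
      (forall j, 0 < Mc N j /\ 0 < gam N j /\ 0 < kap N j /\ 0 < Ac N j
                 /\ 0 < tauN N j /\ 0 < q N j) &
      (forall i j, E N i j -> 0 < B N i j) /\
      (forall i j, Et N i j -> 0 < tauE N i j)].

Definition Ksum (R : realType) (n : nat) (Ld : finType) (N : network R n Ld) : R :=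
  \sum_(j < n) kap N j.

Definition load_at (R : realType) (n : nat) (Ld : finType) (N : network R n Ld)
    (sigma : Ld -> bool) (j : 'I_n) : R :=
  \sum_(l | bus N l == j) dbar N l * (sigma l)%:R.

(* x = (eta, omega, pM, pc, psi) is an equilibrium for fixed sigma:
   every time derivative of the dynamics vanishes. *)
Definition equilibrium (R : realType) (n : nat) (Ld : finType) (N : network R n Ld)
    (sigma : Ld -> bool) (eta : 'I_n -> 'I_n -> R) (omega pM pc : 'I_n -> R)
    (psi : 'I_n -> 'I_n -> R) : Prop :=
  [/\ (forall i j, E N i j -> omega i - omega j = 0),
      (forall j, (pM j - pL N j - Ac N j * omega j - load_at N sigma j
                  - \sum_(k | E N j k) B N j k * eta j k
                  + \sum_(i | E N i j) B N i j * eta i j) / Mc N j = 0),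
      (forall j, - (pM j + kap N j * omega j - kap N j * pc j) / gam N j = 0),
      (forall i j, Et N i j -> (pc i - pc j) / tauE N i j = 0) &
      (forall j, (- pM j + pL N j + load_at N sigma j
                  - \sum_(k | Et N j k) psi j k
                  + \sum_(i | Et N i j) psi i j) / tauN N j = 0)].

Definition Cd (R : realType) (n : nat) (Ld : finType) (N : network R n Ld)
    (sigma : Ld -> bool) (l : Ld) : R :=
  if sigma l != rho N l then cost N l else 0.

Definition Cost (R : realType) (n : nat) (Ld : finType) (N : network R n Ld)
    (pM : 'I_n -> R) (sigma : Ld -> bool) : R :=
  \sum_(j < n) (q N j * (pM j) ^+ 2 / 2 + \sum_(l | bus N l == j) Cd N sigma l).

Definition hosc_feasible (R : realType) (n : nat) (Ld : finType) (N : network R n Ld)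
    (pM : 'I_n -> R) (sigma : Ld -> bool) : Prop :=
  \sum_(j < n) pM j = \sum_(j < n) (pL N j + load_at N sigma j).

(* (pM, sigma) is eps-optimal: its cost is at most the optimal value of H-OSC
   plus eps, i.e. at most the cost of every feasible point plus eps. *)
Definition eps_optimal (R : realType) (n : nat) (Ld : finType) (N : network R n Ld)
    (eps : R) (pM : 'I_n -> R) (sigma : Ld -> bool) : Prop :=
  forall (pM' : 'I_n -> R) (sigma' : Ld -> bool),
    hosc_feasible N pM' sigma' -> Cost N pM sigma <= Cost N pM' sigma' + eps.

Definition switch_cond (R : realType) (n : nat) (Ld : finType) (N : network R n Ld)
    (zeta : R) (sigma : Ld -> bool) (l : Ld) : Prop :=
  let r := cost N l / dbar N l in
  [/\ (zeta > r -> sigma l = false),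
      (zeta = r -> sigma l = false \/ sigma l = rho N l),
      (`|zeta| < r -> sigma l = rho N l),
      (zeta = - r -> sigma l = rho N l \/ sigma l = true) &
      (zeta < - r -> sigma l = true)].

From mathcomp Require Import all_boot all_order all_algebra.
From mathcomp Require Import reals ring lra.

Set Implicit Arguments.
Unset Strict Implicit.
Unset Printing Implicit Defensive.
Import Order.TTheory GRing.Theory Num.Theory.
Local Open Scope ring_scope.

(* At an equilibrium the frequency is constant across the connected power
   network.  Summed over all buses, the line and communication flows cancel:
   the controller equations give feasibility of (p^M, sigma), and the swing
   equations then force the frequency to vanish, so p^M_j = kappa_j p^c.
   With kappa_j = 1 / q_j, the inequality q x^2 / 2 >= zeta x - zeta^2 / (2 q)
   bounds the cost of every feasible point below by the dual value
     zeta * (total demand) - zeta^2 K / 2 + switching costs,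
   and the switching rule makes sigma minimise this dual value load by load.
   The cost of (p^M, sigma) exceeds its own dual value by exactly
   K (p^c - zeta)^2 / 2, which is at most theta^2 / (2 K). *)

Lemma pdivr_eq0 (R : numFieldType) (x y : R) : 0 < y -> (x / y == 0) = (x == 0).
Proof. by move=> y_gt0; rewrite mulf_eq0 invr_eq0 (gt_eqF y_gt0) orbF. Qed.

Lemma graph_connected_const (n : nat) (G : rel 'I_n) (T : eqType)
    (f : 'I_n -> T) :
  graph_connected G -> (forall i j, G i j -> f i = f j) ->
  forall i j, f i = f j.
Proof.
move=> conn f_edge i j.
have closed_fi : closed [rel a b | G a b || G b a] [pred x | f x == f i].
  by move=> x y /orP[] /f_edge; rewrite !inE => ->.
by have := closed_connect closed_fi (conn i j); rewrite !inE eqxx => /esym/eqP.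
Qed.

Lemma sum_net_outflow_eq0 (V : zmodType) (n : nat) (G : rel 'I_n)
    (f : 'I_n -> 'I_n -> V) :
  \sum_(j < n) (\sum_(k | G j k) f j k - \sum_(i | G i j) f i j) = 0.
Proof.
rewrite sumrB; apply/eqP; rewrite subr_eq0; apply/eqP.
under [RHS]eq_bigr do rewrite big_mkcond.
by rewrite exchange_big /=; apply: eq_bigr => i _; rewrite big_mkcond.
Qed.

Lemma sum_over_fibers (V : nmodType) (I : finType) (n : nat)
    (p : I -> 'I_n) (F : I -> V) :
  \sum_(j < n) \sum_(i | p i == j) F i = \sum_i F i.
Proof. by rewrite [RHS](partition_big p xpredT). Qed.

Lemma network_ok_bus_pos (R : realType) (n : nat) (Ld : finType)
    (N : network R n Ld) (j : 'I_n) :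
  network_ok N ->
  [/\ 0 < Mc N j, 0 < gam N j, 0 < Ac N j, 0 < tauN N j & 0 < q N j].
Proof. by case=> _ _ _ /(_ j)[? [? [_ [? [? ?]]]]] _. Qed.

Section Equilibrium.

Variables (R : realType) (n : nat) (Ld : finType) (N : network R n Ld).
Variables (sigma : Ld -> bool) (eta : 'I_n -> 'I_n -> R).
Variables (omega pM pc : 'I_n -> R) (psi : 'I_n -> 'I_n -> R).
Hypothesis N_ok : network_ok N.
Hypothesis eqm : equilibrium N sigma eta omega pM pc psi.

Lemma equilibrium_omega_const (i j : 'I_n) : omega i = omega j.
Proof.
have [[conn _] _ _ _ _] := N_ok; have [d_eta _ _ _ _] := eqm.
apply: graph_connected_const conn _ i j => a b /d_eta/eqP.
by rewrite subr_eq0 => /eqP.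
Qed.

Lemma equilibrium_feasible : hosc_feasible N pM sigma.
Proof.
have [_ _ _ _ d_pc] := eqm.
have balance j : pL N j + load_at N sigma j - pM j =
    \sum_(k | Et N j k) psi j k - \sum_(i | Et N i j) psi i j.
  have [_ _ _ tau_gt0 _] := network_ok_bus_pos j N_ok.
  by move/eqP: (d_pc j); rewrite pdivr_eq0 // => /eqP d_pc_j; lra.
apply/eqP; rewrite eq_sym -subr_eq0 -sumrB (eq_bigr _ (fun j _ => balance j)).
by rewrite sum_net_outflow_eq0.
Qed.

Lemma equilibrium_omega_eq0 (j : 'I_n) : omega j = 0.
Proof.
have [_ d_omega _ _ _] := eqm.
have swing i : Ac N i * omega i =
    pM i - (pL N i + load_at N sigma i)
    - (\sum_(k | E N i k) B N i k * eta i k - \sum_(h | E N h i) B N h i * eta h i).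
  have [M_gt0 _ _ _ _] := network_ok_bus_pos i N_ok.
  by move/eqP: (d_omega i); rewrite pdivr_eq0 // => /eqP d_omega_i; lra.
have sumA_gt0 : 0 < \sum_(i < n) Ac N i.
  have [_ _ A_gt0 _ _] := network_ok_bus_pos j N_ok.
  apply: lt_le_trans A_gt0 _; rewrite (bigD1 j) //= lerDl.
  by apply: sumr_ge0 => i _; have [_ _ /ltW] := network_ok_bus_pos i N_ok.
have : \sum_(i < n) Ac N i * omega i = 0.
  rewrite (eq_bigr _ (fun i _ => swing i)) sumrB sum_net_outflow_eq0 subr0.
  by rewrite sumrB equilibrium_feasible subrr.
under eq_bigr do rewrite (equilibrium_omega_const _ j).
by rewrite -mulr_suml => /eqP; rewrite mulf_eq0 gt_eqF //= => /eqP.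
Qed.

Lemma equilibrium_pM (j : 'I_n) : pM j = kap N j * pc j.
Proof.
have [_ _ d_pM _ _] := eqm.
have [_ gam_gt0 _ _ _] := network_ok_bus_pos j N_ok.
move/eqP: (d_pM j); rewrite pdivr_eq0 // equilibrium_omega_eq0 => /eqP d_pM_j; lra.
Qed.

End Equilibrium.

Lemma switch_cond_argmin (R : realType) (zeta r : R) (s s' rh : bool) :
  (zeta > r -> s = false) ->
  (zeta = r -> s = false \/ s = rh) ->
  (`|zeta| < r -> s = rh) ->
  (zeta = - r -> s = rh \/ s = true) ->
  (zeta < - r -> s = true) ->
  zeta * s%:R + (if s != rh then r else 0) <=
  zeta * s'%:R + (if s' != rh then r else 0).
Proof.
case: s s' rh => [] [] [] //= above at_r inside at_mr below;
  rewrite ?mulr1 ?mulr0 ?addr0 ?add0r ?lexx //.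
- by rewrite leNgt; apply/negP => /above.
- case: (ltgtP zeta r) => [lt_r|/above //|/at_r[] //].
  case: (lerP zeta (- r)) => [?|gt_mr]; first lra.
  by have := inside; rewrite ltr_norml gt_mr lt_r => /(_ isT).
- case: (ltgtP zeta (- r)) => [/below //|gt_mr|/at_mr[] //].
  case: (lerP r zeta) => // lt_r.
  by have := inside; rewrite ltr_norml gt_mr lt_r => /(_ isT).
- by case: (lerP (- r) zeta) => [?|/below //]; lra.
Qed.

Lemma quad_ge_tangent (R : realFieldType) (a x zeta : R) :
  0 < a -> zeta * x - zeta ^+ 2 / a / 2 <= a * x ^+ 2 / 2.
Proof.
move=> a_gt0.
have -> : a * x ^+ 2 / 2 = zeta * x - zeta ^+ 2 / a / 2 + (a * x - zeta) ^+ 2 / a / 2.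
  by field; rewrite gt_eqF.
by rewrite lerDl !divr_ge0 ?sqr_ge0 ?ltW.
Qed.

Section Cost.

Variables (R : realType) (n : nat) (Ld : finType) (N : network R n Ld).

(* Lagrangian of H-OSC with multiplier zeta, minimised over p^M for kappa = 1/q. *)
Definition dual_cost (zeta : R) (sigma : Ld -> bool) : R :=
  zeta * \sum_(j < n) (pL N j + load_at N sigma j)
  - zeta ^+ 2 * Ksum N / 2 + \sum_l Cd N sigma l.

Hypothesis q_gt0 : forall j, 0 < q N j.
Hypothesis kap_inv : forall j, kap N j = (q N j)^-1.

Lemma dual_cost_le_Cost (zeta : R) (pM : 'I_n -> R) (sigma : Ld -> bool) :
  hosc_feasible N pM sigma -> dual_cost zeta sigma <= Cost N pM sigma.
Proof.
move=> feas; rewrite /dual_cost /Cost -feas big_split /= sum_over_fibers lerD2r.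
rewrite mulr_sumr /Ksum mulr_sumr mulr_suml -sumrB; apply: ler_sum => j _.
by rewrite kap_inv mulrA -(mulrA (q N j)); apply: quad_ge_tangent.
Qed.

Lemma dual_cost_switch_min (zeta : R) (sigma sigma' : Ld -> bool) :
  (forall l, 0 < dbar N l) -> (forall l, switch_cond N zeta sigma l) ->
  dual_cost zeta sigma <= dual_cost zeta sigma'.
Proof.
move=> d_gt0 sw; rewrite /dual_cost !big_split /= /load_at !sum_over_fibers.
suff loads : zeta * \sum_l dbar N l * (sigma l)%:R + \sum_l Cd N sigma l <=
             zeta * \sum_l dbar N l * (sigma' l)%:R + \sum_l Cd N sigma' l.
  by rewrite !mulrDr; lra.
rewrite !mulr_sumr -!big_split /=; apply: ler_sum => l _.
have [above at_r inside at_mr below] := sw l.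
have d_neq0 : dbar N l != 0 by rewrite gt_eqF.
have term (s : Ld -> bool) : zeta * (dbar N l * (s l)%:R) + Cd N s l =
    (zeta * (s l)%:R + (if s l != rho N l then cost N l / dbar N l else 0)) * dbar N l.
  by rewrite /Cd mulrDl; case: ifP => _; rewrite ?mul0r ?divfK //; ring.
rewrite !term ler_pM2r //.
exact: switch_cond_argmin.
Qed.

Lemma Cost_sub_dual_cost (zeta pcs : R) (pM : 'I_n -> R) (sigma : Ld -> bool) :
  hosc_feasible N pM sigma -> (forall j, pM j = kap N j * pcs) ->
  Cost N pM sigma = dual_cost zeta sigma + Ksum N * (pcs - zeta) ^+ 2 / 2.
Proof.
move=> feas pM_eq; rewrite /dual_cost -feas /Cost big_split /= sum_over_fibers.
have -> : \sum_(j < n) pM j = Ksum N * pcs by rewrite (eq_bigr _ (fun j _ => pM_eq j)) -mulr_suml.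
have -> : \sum_(j < n) q N j * pM j ^+ 2 / 2 = Ksum N * pcs ^+ 2 / 2.
  rewrite /Ksum !mulr_suml; apply: eq_bigr => j _.
  by rewrite pM_eq kap_inv; field; rewrite gt_eqF.
by rewrite [RHS]addrAC; congr (_ + _); field.
Qed.

End Cost.

Lemma quad_le_theta (R : realType) (K a theta : R) :
  0 <= K -> 0 <= a <= theta / K -> K * a ^+ 2 / 2 <= theta ^+ 2 / (2 * K).
Proof.
move=> K_ge0 /andP[a_ge0 a_le]; have [->|K_neq0] := eqVneq K 0.
  by rewrite !(mul0r, mulr0, invr0).
have -> : theta ^+ 2 / (2 * K) = K * (theta / K) ^+ 2 / 2 by field; rewrite K_neq0.
apply: ler_wpM2r; first by rewrite invr_ge0.
by rewrite ler_wpM2l // ler_sqr ?nnegrE // (le_trans a_ge0).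
Qed.

Theorem proposition1 (R : realType) (n : nat) (Ld : finType)
    (N : network R n Ld) (sigma : Ld -> bool)
    (eta : 'I_n -> 'I_n -> R) (omega pM pc : 'I_n -> R)
    (psi : 'I_n -> 'I_n -> R) (pcs : R) (theta zeta : R) :
  network_ok N ->
  equilibrium N sigma eta omega pM pc psi ->
  (forall j, pc j = pcs) ->
  (forall j, kap N j = (q N j)^-1) ->
  0 <= theta ->
  pcs - theta / Ksum N <= zeta -> zeta <= pcs ->
  (forall l, switch_cond N zeta sigma l) ->
  eps_optimal N (3 * theta ^+ 2 / (2 * Ksum N)) pM sigma.
Proof.
move=> N_ok eqm pc_eq kap_inv theta_ge0 zeta_ge zeta_le sw pM' sigma' feas'.
have q_gt0 j : 0 < q N j by have [] := network_ok_bus_pos j N_ok.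
have [_ _ d_gt0 _ _] := N_ok.
have K_ge0 : 0 <= Ksum N.
  by apply: sumr_ge0 => j _; rewrite kap_inv invr_ge0 ltW.
have pM_eq j : pM j = kap N j * pcs by rewrite (equilibrium_pM N_ok eqm) pc_eq.
rewrite (Cost_sub_dual_cost q_gt0 kap_inv zeta (equilibrium_feasible N_ok eqm) pM_eq).
have gap : Ksum N * (pcs - zeta) ^+ 2 / 2 <= 3 * theta ^+ 2 / (2 * Ksum N).
  have zeta_near : 0 <= pcs - zeta <= theta / Ksum N by apply/andP; split; lra.
  apply: le_trans (quad_le_theta K_ge0 zeta_near) _.
  apply: ler_wpM2r; first by rewrite invr_ge0 mulr_ge0.
  by rewrite ler_peMl ?sqr_ge0 // ler1n.
apply: lerD gap; apply: le_trans (dual_cost_le_Cost q_gt0 kap_inv zeta feas').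
exact: dual_cost_switch_min.
Qed.
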